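(* Let $k\in\{1,\dots,n\}$ and let $R$ be a $k$-return of an $n$-DPDA. Then $\mathsf{pop}^k(\mathrm{top}^k(R(0)))\cong\mathrm{top}^k(R(|R|))$, and for every $0$-stack $s^0$ in $\mathrm{top}^k(R(|R|))$, $\mathrm{hist}(R,s^0)$ is the $0$-stack at the corresponding location in $\mathsf{pop}^k(\mathrm{top}^k(R(0)))$.
   Context: Stacks: fix order $n\ge1$, finite stack alphabet $\Gamma$. A $0$-stack is $(\gamma,x)$ with $\gamma\in\Gamma$, $x=(x_n,\dots,x_1)$ a vector of $n$ positive integers (position). For $k\in\{1,\dots,n\}$ a $k$-stack is a finite list $[s_1,\dots,s_m]$ ($m\ge0$) of nonempty $(k-1)$-stacks such that for some $x_n,\dots,x_{k+1}$, every position in $s_i$ has the form $(x_n,\dots,x_{k+1},i,y_{k-1},\dots,y_1)$. The top is at the right; $s^k:s^{k-1}$ appends at the top (right-associative); for $s^r=t^r:t^{r-1}:\dots:t^k$, $\mathrm{top}^k(s^r)=t^k$. Equality of stacks includes positions. $\mathrm{pos}{\downarrow}(s)$ deletes all positions; $s\cong t$ iff $\mathrm{pos}{\downarrow}(s)=\mathrm{pos}{\downarrow}(t)$. For $k<n$, $\mathsf p_{+1}(s^k)$ adds $1$ to the $(n-k)$-th coordinate of all positions. Operations of order $k\ge1$: $\mathsf{pop}^k(s^r:\dots:s^k:s^{k-1})=s^r:\dots:s^k$, defined only if the topmost $k$-stack has at least two $(k-1)$-stacks; $\mathsf{push}^k_\gamma(s^r:\dots:s^0)=s^r:\dots:s^{k+1}:(s^k:\dots:s^0):\mathsf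 p_{+1}(s^{k-1}:\dots:s^1:(\gamma,x))$ where $s^0=(\gamma',x)$. An $n$-DPDA has transitions determined by state and topmost stack symbol, each either $\mathrm{read}(\vec q)$ ($\vec q:A\to Q$ injective; leads to $(\vec q(a),s)$, reading $a$) or $(q,op)$ with $op$ a stack operation of order $\le n$ (leads to $(q,op(s))$ if defined). Configurations are (state, nonempty $n$-stack). A run is a finite sequence $R=c_0,\dots,c_m$ with each $c_i$ a successor of $c_{i-1}$; $R(i)=c_i$, $|R|=m$, $R[i,j]=c_i,\dots,c_j$. $\mathrm{top}^k(c)$, $\mathsf{pop}^k(c)$ refer to the stack of $c$. History: for a run $R$ and a $0$-stack $s^0$ of $R(|R|)$, $\mathrm{hist}(R,s^0)$ is a $0$-stack of $R(0)$: if $|R|=0$ it is $s^0$; if $R=S\circ T$, $|T|=1$, and the last step is a read or a $\mathsf{pop}$, or a $\mathsf{push}^r_\gamma$ with $s^0$ not in the topmost $(r-1)$-stack of $R(|R|)$, it is $\mathrm{hist}(S,s^0)$; if the last step is $\mathsf{push}^r_\gamma$ and $s^0$ is in the topmost $(r-1)$-stack of $R(|R|)$, it is $\mathrm{hist}(S,t^0)$ with $t^0$ equal to $s^0$ with the $(n-r+1)$-th position coordinate decreased by $1$. For a $k$-stack $s^k$ of $R(|R|)$, $k\ge1$, $\mathrm{hist}(R,s^k)$ is the $k$-stack of $R(0)$ containing $\mathrm{hist}(R,s^0)$ for all $0$-stacks $s^0$ of $s^k$. For $k\in\{0,\dots,n\}$, $R$ is $k$-upper if $\mathrm{hist}(R,\mathrm{top}^k(R(|R|)))=\mathrm{top}^k(R(0))$.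 For $k\in\{1,\dots,n\}$, $R$ is a $k$-return if $\mathrm{hist}(R,\mathrm{top}^{k-1}(R(|R|)))=\mathrm{top}^{k-1}(\mathsf{pop}^k(R(0)))$ and $R[i,|R|]$ is not $(k-1)$-upper for every $i\in\{0,\dots,|R|-1\}$. *)

From mathcomp Require Import all_boot.
From Stdlib Require List.

Set Implicit Arguments. Unset Strict Implicit. Unset Printing Implicit Defensive.

(* A 0-stack (gamma, x) is [Leaf gamma x], x = [:: x_n; ...; x_1]
   (the list head is x_n).  A k-stack (k >= 1) [s_1, ..., s_m] is
   [Node [:: s_1; ...; s_m]]: the top is the LAST element of the list. *)
Inductive stk (G : Type) : Type :=
| Leaf of G & seq nat
| Node of seq (stk G).
Arguments Leaf {G}.
Arguments Node {G}.

Section Stacks.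
Variable G : Type.

Definition nonempty (s : stk G) : Prop :=
  match s with Leaf _ _ => True | Node l => l <> [::] end.

(* [wf d pre s] : s is a d-stack all of whose positions start with the prefix
   [pre] = (x_n, ..., x_{d+1}); the i-th (d-1)-stack (1-based) is nonempty and
   has positions starting with (x_n, ..., x_{d+1}, i). *)
Fixpoint wf (d : nat) (pre : seq nat) (s : stk G) {struct s} : Prop :=
  match s with
  | Leaf _ x => d = 0 /\ x = pre /\ all (fun y => 0 < y) x
  | Node l => 0 < d /\
      (fix go (i : nat) (l : seq (stk G)) : Prop :=
         match l with
         | [::] => True
         | t :: l' => nonempty t /\ wf d.-1 (rcons pre i) t /\ go i.+1 l'
         end) 1 l
  end.

Definition lastopt (T : Type) (l : seq T) : option T :=
  if l is x :: l' then Some (last x l') else None.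

Fixpoint desc (d : nat) (s : stk G) : option (stk G) :=
  match d with
  | 0 => Some s
  | d'.+1 => match s with
             | Node l => match lastopt l with Some t => desc d' t | None => None end
             | Leaf _ _ => None
             end
  end.

Definition top (n k : nat) (s : stk G) : option (stk G) := desc (n - k) s.

Fixpoint modtop (d : nat) (f : stk G -> option (stk G)) (s : stk G) : option (stk G) :=
  match d with
  | 0 => f s
  | d'.+1 => match s with
             | Node (x :: l') =>
                 match modtop d' f (last x l') with
                 | Some t' => Some (Node (rcons (belast x l') t'))
                 | None => None
                 end
             | _ => None
             end
  end.

Definition popl (s : stk G) : option (stk G) :=
  match s with
  | Node (x :: (y :: l'')) => Some (Node (belast x (y :: l'')))
  | _ => None
  end.

Fixpoint settop (g : G) (s : stk G) : stk G :=
  match s with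
  | Leaf _ x => Leaf g x
  | Node l => Node ((fix ml (l : seq (stk G)) : seq (stk G) :=
                       match l with
                       | [::] => [::]
                       | [:: x] => [:: settop g x]
                       | x :: l' => x :: ml l'
                       end) l)
  end.

Fixpoint mapPos (f : seq nat -> seq nat) (s : stk G) : stk G :=
  match s with
  | Leaf g x => Leaf g (f x)
  | Node l => Node ((fix ml (l : seq (stk G)) : seq (stk G) :=
                       match l with [::] => [::] | x :: l' => mapPos f x :: ml l' end) l)
  end.

(* add / subtract 1 at the coordinate with 0-based index i
   (i.e. the (i+1)-th coordinate of (x_n, ..., x_1)) *)
Definition incAt (i : nat) (x : seq nat) : seq nat := set_nth 0 x i (nth 0 x i).+1.
Definition decAt (i : nat) (x : seq nat) : seq nat := set_nth 0 x i (nth 0 x i).-1.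

Definition pop (n k : nat) (s : stk G) : option (stk G) := modtop (n - k) popl s.

(* push^k_g : duplicate the topmost (k-1)-stack of the topmost k-stack,
   replace its topmost symbol by g, and add 1 to the (n-k+1)-th coordinate
   (0-based index n-k) of all its positions -- this is p_{+1} of a (k-1)-stack *)
Definition push (n k : nat) (g : G) (s : stk G) : option (stk G) :=
  modtop (n - k)
    (fun t => match t with
              | Node (x :: l') =>
                  Some (Node (rcons (x :: l') (mapPos (incAt (n - k)) (settop g (last x l')))))
              | _ => None
              end) s.

Fixpoint leavesOf (s : stk G) : seq (stk G) :=
  match s with
  | Leaf g x => [:: Leaf g x]
  | Node l => (fix ml (l : seq (stk G)) : seq (stk G) :=
                 match l with [::] => [::] | x :: l' => leavesOf x ++ ml l' end) l
  end.

Definition is_leaf (s : stk G) : bool := if s is Leaf _ _ then true else false.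

Definition posof (s : stk G) : option (seq nat) :=
  match s with Leaf _ x => Some x | Node _ => None end.

Definition positions (s : stk G) : seq (seq nat) := pmap posof (leavesOf s).

Definition leaf_at (x : seq nat) (s : stk G) : option (stk G) :=
  ohead [seq t <- leavesOf s | posof t == Some x].

(* substack at a location (0-based indices, from the bottom of each list) *)
Fixpoint at_path (p : seq nat) (s : stk G) : option (stk G) :=
  match p with
  | [::] => Some s
  | i :: p' => match s with
               | Node l => if i < size l then at_path p' (nth s l i) else None
               | Leaf _ _ => None
               end
  end.

(* pos-down: delete all positions; s ~= t iff pos-down s = pos-down t *)
Fixpoint erase (s : stk G) : stk G :=
  match s with
  | Leaf g _ => Leaf g [::]
  | Node l => Node ((fix ml (l : seq (stk G)) : seq (stk G) :=
                       match l with [::] => [::] | x :: l' => erase x :: ml l' end) l)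
  end.

Definition cong (s t : stk G) : Prop := erase s = erase t.

End Stacks.

Inductive sop (G : Type) : Type :=
| Pop of nat
| Push of nat & G.
Arguments Pop {G}.
Arguments Push {G}.

Definition sop_ord (G : Type) (o : sop G) : nat :=
  match o with Pop k => k | Push k _ => k end.

Inductive trans (Q A G : Type) : Type :=
| Read (f : A -> Q) of injective f
| Do of Q & sop G.
Arguments Read {Q A G}.
Arguments Do {Q A G}.

Section DPDA.
Variables (n : nat) (Q A G : finType).
Variable delta : Q -> G -> option (trans Q A G).

Definition dpda_ok : Prop :=
  forall q g q' o, delta q g = Some (Do q' o) -> 1 <= sop_ord o <= n.

Definition config := (Q * stk G)%type.

Definition is_config (c : config) : Prop := wf n [::] c.2 /\ nonempty c.2.

Definition applyOp (o : sop G) (s : stk G) : option (stk G) :=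
  match o with Pop k => pop n k s | Push k g => push n k g s end.

Definition topsym (s : stk G) : option G :=
  match top n 0 s with Some (Leaf g _) => Some g | _ => None end.

Definition trans_of (c : config) : option (trans Q A G) :=
  match topsym c.2 with Some g => delta c.1 g | None => None end.

Definition succ (c c' : config) : Prop :=
  match trans_of c with
  | Some (Read f _) => exists a, c' = (f a, c.2)
  | Some (Do q o) => c'.1 = q /\ applyOp o c.2 = Some c'.2
  | None => False
  end.

(* A run R = c_0, ..., c_m is represented as (c_0, [:: c_1; ...; c_m]);
   R(0) = run_first R, R(|R|) = run_last R, |R| = size R.2. *)
Definition run := (config * seq config)%type.
Definition run_first (R : run) : config := R.1.
Definition run_last (R : run) : config := last R.1 R.2.

Fixpoint chain (c : config) (l : seq config) : Prop :=
  match l with [::] => True | c' :: l' => succ c c' /\ chain c' l' end.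

Definition is_run (R : run) : Prop :=
  chain R.1 R.2 /\ List.Forall is_config (R.1 :: R.2).

Definition suffix (R : run) (i : nat) : run :=
  let l := drop i (R.1 :: R.2) in (head R.1 l, behead l).

(* one backward step of the history of the 0-stack at position x of c',
   where c' is the successor of c *)
Definition back (c c' : config) (x : seq nat) : seq nat :=
  match trans_of c with
  | Some (Do _ (Push r _)) =>
      match top n r.-1 c'.2 with
      | Some t => if x \in positions t then decAt (n - r) x else x
      | None => x
      end
  | _ => x
  end.

Definition histpos (R : run) (x : seq nat) : seq nat :=
  foldr (fun pr acc => back pr.1 pr.2 acc) x (zip (belast R.1 R.2) R.2).

(* hist(R, s^0) : the 0-stack of R(0) (identified by its position) *)
Definition hist (R : run) (s0 : stk G) : option (stk G) :=
  match posof s0 with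
  | Some x => leaf_at (histpos R x) (run_first R).2
  | None => None
  end.

(* hist(R, t) = u for a k-stack t of R(|R|): u is a k-stack of R(0)
   containing hist(R, s^0) for all 0-stacks s^0 of t *)
Definition hist_is (R : run) (k : nat) (t u : stk G) : Prop :=
  (exists p, size p = n - k /\ at_path p (run_first R).2 = Some u) /\
  forall s0, List.In s0 (leavesOf t) ->
    exists s0', hist R s0 = Some s0' /\ List.In s0' (leavesOf u).

Definition upper (R : run) (k : nat) : Prop :=
  exists t u, top n k (run_last R).2 = Some t /\ top n k (run_first R).2 = Some u /\
              hist_is R k t u.

Definition kreturn (R : run) (k : nat) : Prop :=
  (exists s' t u, pop n k (run_first R).2 = Some s' /\
                  top n k.-1 (run_last R).2 = Some t /\
                  top n k.-1 s' = Some u /\ hist_is R k.-1 t u) /\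
  (forall i, i < size R.2 -> ~ upper (suffix R i) k.-1).

End DPDA.

(* Stacks are trees; a substack is addressed by a location (list of 0-based
   child indices), and in a well-formed stack the position of the 0-stack at
   location p is [map S p] (Lemma [leaf_position]), so histories, which act
   on positions, can be read as maps on locations.

   The proof runs backwards along R.  Let tm = [Node tmch] be top^k(R(|R|)).
   The invariant [Inv] at configuration c says: there is a location L of a
   k-stack of c such that for every child index j, c has at L ++ [j] a stack
   congruent to the j-th child of tm, and the history of each 0-stack in that
   child is the 0-stack at the corresponding location under L ++ [j].
   It holds trivially at R(|R|).  A backward step over a read, pop^r or
   push^r either preserves it (for a possibly new L), or shows that the
   suffix of R starting at the earlier configuration is (k-1)-upper, which
   the definition of a k-return forbids ([step_pop], [step_push]).  At R(0),
   comparing with the first clause of a k-return pins L down as the location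
   of top^k(R(0)) and the last child index as that of top^(k-1)(pop^k(R(0))),
   which yields the theorem. *)
From Pilot Require Import Defs.
From mathcomp Require Import all_boot.
From Stdlib Require List.
From mathcomp Require Import zify.
From Stdlib Require Import Lia.
Set Implicit Arguments. Unset Strict Implicit. Unset Printing Implicit Defensive.

Section Stacks.
Variable G : Type.
Implicit Types (s t : stk G) (l : seq (stk G)).
Local Notation N0 := (Node [::] : stk G).

Definition stk_ind_forall (P : stk G -> Prop) (HL : forall g x, P (Leaf g x))
  (HN : forall l, List.Forall P l -> P (Node l)) : forall s, P s :=
  fix F s := match s with
  | Leaf g x => HL g x
  | Node l => HN l ((fix H l := match l return List.Forall P l with
                      | [::] => List.Forall_nil _
                      | t :: l' => List.Forall_cons _ (F t) (H l') end) l)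
  end.

Lemma at_path_cat p q s : at_path (p ++ q) s = obind (at_path q) (at_path p s).
Proof. elim: p s => [|i p IH] [g x|l] //=. by case: ifP. Qed.

Lemma at_path_node i q l :
  at_path (i :: q) (Node l) = if i < size l then at_path q (nth N0 l i) else None.
Proof. rewrite /=; case: ifP => // H. by rewrite (set_nth_default N0). Qed.

Lemma leavesOf_node l : leavesOf (Node l) = flatten (map (@leavesOf G) l).
Proof. by elim: l => //= x l ->. Qed.

Lemma erase_node l : erase (Node l) = Node (map (@erase G) l).
Proof. elim: l => //= x l IH; by case: IH => ->. Qed.

Lemma mapPos_node f l : mapPos f (Node l) = Node (map (mapPos f) l).
Proof. elim: l => //= x l IH; by case: IH => ->. Qed.

Lemma settop_node (g : G) l : settop g (Node l) =
  Node (if l is x :: l' then rcons (belast x l') (settop g (last x l')) else [::]).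
Proof. elim: l => //= x l IH. case: l IH => //= y l IH. by case: IH => ->. Qed.

Lemma erase_mapPos f s : erase (mapPos f s) = erase s.
Proof.
elim/stk_ind_forall: s => [g x|l IH] //. rewrite mapPos_node !erase_node -map_comp.
congr Node. elim: IH => //= x l' Hx _ IH2. by rewrite Hx IH2.
Qed.

Lemma wf_children_iff d pre l j :
  (fix go (i : nat) (l : seq (stk G)) : Prop :=
         match l with
         | [::] => True
         | t :: l' => nonempty t /\ wf d.-1 (rcons pre i) t /\ go i.+1 l'
         end) j l <-> forall i, i < size l -> nonempty (nth N0 l i) /\
                    wf d.-1 (rcons pre (j + i)) (nth N0 l i).
Proof.
elim: l j => [|t l IH] j /=; first by split.
split.
- move=> [H1 [H2 /IH H3]] [|i] /=; first by rewrite addn0.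
  rewrite ltnS => /H3. by rewrite addSnnS.
- move=> H; have [H1 H2] := H 0 isT; rewrite addn0 in H2; split => //; split => //.
  apply/IH => i Hi. have := H i.+1 Hi. by rewrite addSnnS.
Qed.

Lemma wf_node d pre l : wf d pre (Node l) <-> 0 < d /\ forall i, i < size l ->
  nonempty (nth N0 l i) /\ wf d.-1 (rcons pre i.+1) (nth N0 l i).
Proof.
rewrite /=; split => [[H1 /wf_children_iff H2]|[H1 H2]]; split => //; exact/wf_children_iff.
Qed.

Lemma wf_at_path p d pre s t : wf d pre s -> at_path p s = Some t ->
  size p <= d /\ wf (d - size p) (pre ++ map S p) t.
Proof.
elim: p d pre s => [|i p IH] d pre s; first by move=> H [<-]; rewrite subn0 cats0.
case: s => [g x|l] //; rewrite at_path_node.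
case: ifP => // Hi /wf_node [Hd H] /IH Ht.
have [_ /Ht [H1 H2]] := H i Hi. split; first by rewrite /= -(prednK Hd) ltnS.
rewrite /= -cat_rcons; congr wf: H2; lia.
Qed.

Lemma wf_leaf d pre (g : G) x : wf d pre (Leaf g x) -> d = 0 /\ x = pre.
Proof. by case=> [-> [->]]. Qed.

Lemma leaf_position d pre s p (g : G) x : wf d pre s -> at_path p s = Some (Leaf g x) ->
  x = pre ++ map S p /\ size p = d.
Proof.
move=> W /(wf_at_path W) [H1 /wf_leaf [H2 H3]]; split => //.
by apply/eqP; rewrite eqn_leq H1 -subn_eq0 H2.
Qed.

Lemma erase_at_path p (a b a' : stk G) : erase a = erase b -> at_path p a = Some a' ->
  exists b', at_path p b = Some b' /\ erase a' = erase b'.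
Proof.
elim: p a b => [|i p IH] a b; first by move=> E [<-]; exists b.
case: a => [g x|la] //; case: b => [g x|lb]; rewrite ?erase_node //.
move=> [] E; rewrite !at_path_node.
have Es : size la = size lb by rewrite -(size_map (@erase G) la) E size_map.
rewrite Es; case: ifP => // Hi; apply: IH.
have := congr1 (fun l => nth (erase N0) l i) E.
by rewrite (nth_map N0) ?Es // (nth_map N0).
Qed.

Lemma erase_leaf_inv s (g : G) x : erase (Leaf g x) = erase s ->
  exists g' x', s = Leaf g' x'.
Proof. case: s => [g' x'|l]; last by rewrite erase_node. by exists g', x'. Qed.

Lemma in_leavesOf s t : List.In t (leavesOf s) <-> exists p, at_path p s = Some t /\ is_leaf t.
Proof.
elim/stk_ind_forall: s t => [g x|l IHl] t.
- simpl; split; first by move=> [<-|[]]; exists [::].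
  by move=> [[|i p] [] //= [<-] _]; left.
rewrite leavesOf_node. elim: l IHl => [|x l IH] Hf.
- split => //=. by move=> [[|i p] []] //= [<-].
inversion Hf as [|x' l' Hx Hl]; subst. rewrite /= List.in_app_iff.
split.
- move=> [/Hx [p [Hp Lt]]|/(IH Hl) [[|i p] [Hp Lt]]].
  + by exists (0 :: p).
  + by move: Hp => [] E; rewrite -E in Lt.
  + exists (i.+1 :: p); split => //. move: Hp; rewrite !at_path_node /=; by case: ifP.
- move=> [[|[|i] p] [Hp Lt]].
  + by move: Hp => [] E; rewrite -E in Lt.
  + left; apply/Hx; by exists p.
  + right; apply/(IH Hl); exists (i :: p); split => //.
    move: Hp; rewrite !at_path_node /=; by case: ifP.
Qed.

Lemma ohead_filter_unique (T : Type) (P : pred T) (L : seq T) a :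
  (forall y, List.In y L -> P y -> y = a) -> List.In a L -> P a -> ohead (filter P L) = Some a.
Proof.
elim: L => //= x L IH H Ha Pa. case: ifP => Px.
- by rewrite (H x (or_introl erefl) Px).
- case: Ha => [Ex|Ha]; first by rewrite Ex Pa in Px.
  apply: IH => // y Hy; exact: H y (or_intror Hy).
Qed.

(* In a well-formed stack positions are unique, so [leaf_at] finds the
   0-stack at a location from its position. *)
Lemma leaf_at_of_path d pre s p (g : G) x : wf d pre s -> at_path p s = Some (Leaf g x) ->
  leaf_at x s = Some (Leaf g x).
Proof.
move=> W Hp. have [Ex _] := leaf_position W Hp.
apply: ohead_filter_unique => //=; last by apply/in_leavesOf; exists p.
move=> t /in_leavesOf [p' [Hp' Lt]] /eqP; case: t Hp' Lt => // g' x' Hp' _ [] E.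
have [Ex' _] := leaf_position W Hp'. rewrite Ex Ex' in E.
move/eqP: E; rewrite eqseq_cat // => /andP [_ /eqP /(inj_map succn_inj) E3].
rewrite -E3 Hp' in Hp. by case: Hp => -> ->.
Qed.

Lemma mem_positions t x : x \in positions t <-> exists (g : G) p, at_path p t = Some (Leaf g x).
Proof.
rewrite /positions.
have H : forall L : seq (stk G), x \in pmap (@posof G) L <-> exists g, List.In (Leaf g x) L.
  elim=> [|y L IH] /=; first by split => // [[]].
  case: y => [g y|l] /=.
  - rewrite in_cons; split.
    + move=> /orP [/eqP ->|/IH [g' Hg]]; first by exists g; left.
      by exists g'; right.
    + move=> [g' [[_ ->]|Hg]]; first by rewrite eqxx.
      apply/orP; right; apply/IH; by exists g'.
  - rewrite IH; split => [[g' Hg]|[g' [//|Hg]]]; exists g'; [right|]; done.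
rewrite H; split.
- move=> [g /in_leavesOf [p [Hp _]]]; by exists g, p.
- move=> [g [p Hp]]; exists g; apply/in_leavesOf; by exists p.
Qed.

Fixpoint toppath (d : nat) s : seq nat :=
  match d with 0 => [::] | d'.+1 =>
    match s with Node l => (size l).-1 :: toppath d' (last s l) | Leaf _ _ => [::] end end.

Fixpoint topsub (d : nat) s : stk G :=
  match d with 0 => s | d'.+1 =>
    match s with Node l => topsub d' (last s l) | Leaf _ _ => s end end.

Lemma toppath_cat d e s : toppath (d + e) s = toppath d s ++ toppath e (topsub d s).
Proof. elim: d s => [|d IH] [g x|l] //=; last by rewrite IH. by clear IH; case: e. Qed.

Lemma toppath_take d e s : toppath d s = take d (toppath (d + e) s).
Proof. elim: d s => [|d IH] [g x|l] //=; try by rewrite take0. by rewrite -IH. Qed.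

Lemma lastopt_rcons l z : lastopt (rcons l z) = Some z.
Proof. case: l => //= y l; by rewrite last_rcons. Qed.

Lemma desc_at d s t : desc d s = Some t ->
  at_path (toppath d s) s = Some t /\ topsub d s = t /\ size (toppath d s) = d.
Proof.
elim: d s => [|d IH] [g x|l] //=; [by move=> [->] | by move=> [->] |].
case: l => //= y l /IH [H1 [H2 H3]]; rewrite H2 H3; split => //.
by rewrite ltnSn nth_last.
Qed.

Lemma desc_cat d e s : desc (d + e) s = obind (desc e) (desc d s).
Proof. elim: d s => [|d IH] [g x|l] //=. by case: (lastopt l). Qed.

Lemma desc_wf e d pre s : wf d pre s -> nonempty s -> e <= d ->
  exists t, desc e s = Some t /\ nonempty t.
Proof.
elim: e d pre s => [|e IH] d pre s W N Hed; first by exists s.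
case: s W N => [g x|l] W N.
- by have [Hd _] := wf_leaf W; rewrite Hd in Hed.
- case: l W N => [|y l] W N //. move/wf_node: W => [Hd H].
  have [H1 H2] := H (size l) (ltnSn _).
  rewrite -[size l]/((size (y :: l)).-1) nth_last /= in H1 H2.
  have [t [Ht Nt]] := IH _ _ _ H2 H1 (ltac:(lia) : e <= d.-1). by exists t.
Qed.

Lemma has_leaf d pre s : wf d pre s -> nonempty s ->
  exists p (g : G) x, at_path p s = Some (Leaf g x).
Proof.
move=> W N. have [t [Ht _]] := desc_wf W N (leqnn d).
have [H1 [_ H3]] := desc_at Ht. have [_ Wt] := wf_at_path W H1.
rewrite H3 subnn in Wt.
case: t Ht H1 Wt => [g x|l] Ht H1 Wt; first by exists (toppath d s), g, x.
by case: Wt.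
Qed.

Lemma toppath_last_max L s e j x :
  at_path (L ++ [:: e]) s = Some x -> L ++ [:: j] = toppath (size L).+1 s -> e <= j.
Proof.
elim: L s => [|i L IH] [g y|l] //.
- rewrite [_ ++ _]/= at_path_node. case: ifP => // He _ [->]. lia.
- rewrite [_ ++ _]/= at_path_node. case: ifP => // Hi H [Ei H2].
  apply: IH H _. rewrite (set_nth_default (Node l)) // Ei nth_last. exact: H2.
Qed.

Lemma at_path_mapPos q f s : at_path q (mapPos f s) = omap (mapPos f) (at_path q s).
Proof.
elim: q s => [|i q IH] [g x|l] //. rewrite mapPos_node !at_path_node size_map.
case: ifP => // Hi. by rewrite (nth_map N0) // -mapPos_node IH.
Qed.

Lemma toppath_mapPos d f s : toppath d (mapPos f s) = toppath d s.
Proof.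
elim: d s => [|d IH] [g x|l] //. rewrite mapPos_node /= size_map.
by rewrite -mapPos_node last_map IH.
Qed.

Lemma toppath_settop d (g : G) s : toppath d (settop g s) = toppath d s.
Proof.
elim: d s => [|d IH] [g' x|l] //. rewrite settop_node.
case: l => [|y l] //=. by rewrite size_rcons size_belast last_rcons IH.
Qed.

Lemma at_path_settop q (g : G) s : at_path q (settop g s) =
  omap (if q == toppath (size q) s then settop g else id) (at_path q s).
Proof.
elim: q s => [|i q IH] [g' x|l] //. rewrite settop_node.
case: l => [|y l]; first by rewrite !at_path_node.
rewrite !at_path_node size_rcons size_belast /= eqseq_cons.
case: ifP => // Hi. rewrite lastI nth_rcons size_belast.
case: ltnP => Hil.
- by rewrite (ltn_eqF Hil) /= nth_rcons size_belast Hil; case: at_path.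
- have Ei : i = size l by apply/eqP; rewrite eqn_leq Hil -ltnS Hi.
  by rewrite Ei eqxx IH nth_rcons size_belast ltnn eqxx.
Qed.

Lemma at_path_settop_off_top q (g : G) s : q != toppath (size q) s ->
  at_path q (settop g s) = at_path q s.
Proof. rewrite at_path_settop => /negbTE ->; by case: at_path. Qed.

Lemma settop_at_leaf q (g : G) s t : at_path q (settop g s) = Some t -> is_leaf t ->
  exists g' x, at_path q s = Some (Leaf g' x).
Proof.
rewrite at_path_settop; case: (at_path q s) => //= t' [<-].
by case: ifP => _; case: t' => //= g' x _; exists g', x.
Qed.

Lemma nth_belast_neq y l z j : j < (size l).+1 -> j != size l ->
  nth N0 (rcons (belast y l) z) j = nth N0 (y :: l) j.
Proof.
move=> H1 H2. have H3 : j < size l by rewrite ltn_neqAle H2 -ltnS H1.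
by rewrite [y :: l]lastI !nth_rcons size_belast H3.
Qed.

Lemma modtop_spec d f s s' : modtop d f s = Some s' -> exists t0 t1,
  desc d s = Some t0 /\ f t0 = Some t1 /\ desc d s' = Some t1 /\
  toppath d s' = toppath d s /\
  (forall q, at_path (toppath d s ++ q) s' = at_path q t1) /\
  (forall q i, i < size q -> i < d -> nth 0 q i != nth 0 (toppath d s) i ->
     at_path q s' = at_path q s).
Proof.
elim: d s s' => [|d IH] s s'.
- move=> /= H; exists s, s'; do !split => // q i _; by rewrite ltn0.
case: s => [g x|[|y l]] //.
rewrite [modtop _ _ _]/=.
case E: (modtop d f (last y l)) => [t'|] // [<-].
have [t0 [t1 [H1 [H2 [H3 [H4 [H5 H6]]]]]]] := IH _ _ E.
exists t0, t1.
rewrite [desc _ (Node (rcons _ _))]/= lastopt_rcons.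
rewrite [toppath _ (Node (rcons _ _))]/= size_rcons size_belast last_rcons H4.
do !split => //.
- move=> q; rewrite [_ ++ q]/= at_path_node size_rcons size_belast ltnSn.
  by rewrite nth_rcons size_belast ltnn eqxx H5.
- move=> [|j q] [|i] // Hi Hd Hn; rewrite /= in Hn Hi Hd.
  + rewrite !at_path_node size_rcons size_belast. case: ifP => // Hj.
    by rewrite nth_belast_neq.
  + rewrite !at_path_node size_rcons size_belast. case: ifP => // Hj.
    case: (eqVneq j (size l)) => Ej; last by rewrite nth_belast_neq.
    rewrite Ej nth_rcons size_belast ltnn eqxx -[size l]/((size (y :: l)).-1) nth_last /=.
    exact: H6 Hi Hd Hn.
Qed.

Lemma popl_spec t t' : popl t = Some t' ->
  exists b z, t = Node (rcons b z) /\ 0 < size b /\ t' = Node b.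
Proof. case: t => // [[|x [|y l]]] //= [<-]. exists (belast x (y::l)), (last y l). by rewrite -lastI. Qed.

End Stacks.

Lemma prefix_trichotomy (q T : seq nat) : T ++ drop (size T) q = q \/
  q ++ drop (size q) T = T \/ exists i, [/\ i < size q, i < size T & nth 0 q i != nth 0 T i].
Proof.
elim: T q => [|a T IH] [|b q] /=; rewrite ?drop0; auto.
case: (eqVneq b a) => [<-|Hab].
- case: (IH q) => [->|[->|[i [H1 H2 H3]]]]; auto. right; right; by exists i.+1.
- right; right; by exists 0.
Qed.

Lemma decAt_map (T : seq nat) a z : 0 < a ->
  decAt (size T) (map S (T ++ a :: z)) = map S (T ++ a.-1 :: z).
Proof.
move=> Ha; rewrite /decAt. elim: T => [|b T IH] /=; first by rewrite prednK.
by congr cons.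
Qed.

Lemma pop_spec (G : Type) d (s s' : stk G) : modtop d (@popl G) s = Some s' ->
  toppath d s' = toppath d s /\ size (toppath d s) = d /\
  forall q x, (d < size q \/ take (size q) (toppath d s) != q) ->
    at_path q s' = Some x -> at_path q s = Some x.
Proof.
move=> /modtop_spec [t0 [t1 [H1 [H2 [H3 [H4 [H5 H6]]]]]]].
have [Ht0 [_ Hsz]] := desc_at H1.
have [b [z [Et0 [Hb Et1]]]] := popl_spec H2. subst t0 t1.
do 2!split => //.
move=> q x Hq. case: (prefix_trichotomy q (toppath d s)) => [E|[E|[i [Hi1 Hi2 Hi3]]]].
- move: Hq; rewrite -E H5 at_path_cat Ht0 Hsz.
  case: (drop d q) => [|a w] /=.
  + by rewrite cats0 take_size eqxx Hsz ltnn => [[]].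
  + move=> _. case: ifP => // Ha. rewrite size_rcons ltnS ltnW // nth_rcons Ha.
    by rewrite (set_nth_default (Node b)).
- have Hs : size q <= d by rewrite -Hsz -E size_cat leq_addr.
  move: Hq; rewrite -{1}E take_size_cat // eqxx => [[]] //. by rewrite ltnNge Hs.
- rewrite Hsz in Hi2; move=> Hx; by rewrite -Hx (H6 q i Hi1 Hi2 Hi3).
Qed.

Lemma push_spec (G : Type) m r (g : G) (s s' : stk G) : push m r g s = Some s' -> exists ch nc,
  [/\ 0 < size ch, nc = mapPos (incAt (m-r)) (settop g (last (Node [::]) ch)),
      size (toppath (m-r) s) = m - r,
      desc (m-r).+1 s' = Some nc & desc (m-r).+1 s = Some (last (Node [::]) ch)] /\
  [/\ forall q, at_path (toppath (m-r) s ++ size ch :: q) s' = at_path q nc,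
      forall a q, a != size ch -> at_path (toppath (m-r) s ++ a :: q) s' = at_path (toppath (m-r) s ++ a :: q) s,
      forall q, at_path (toppath (m-r) s ++ (size ch).-1 :: q) s = at_path q (last (Node [::]) ch),
      forall e, toppath ((m-r).+1 + e) s' = toppath (m-r) s ++ size ch :: toppath e nc &
      forall e, toppath ((m-r).+1 + e) s = toppath (m-r) s ++ (size ch).-1 :: toppath e (last (Node [::]) ch)] /\
  forall q i, i < size q -> i < m-r -> nth 0 q i != nth 0 (toppath (m-r) s) i -> at_path q s' = at_path q s.
Proof.
rewrite /push => /modtop_spec [t0 [t1 [H1 [H2 [H3 [H4 [H5 H6]]]]]]].
case: t0 H1 H2 => [//|[//|x l]] H1 [Et1].
rewrite -rcons_cons in Et1.
set nc := mapPos _ _ in Et1. subst t1.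
have [Ht0 [Hd0 Hsz]] := desc_at H1. have [Ht1 [Hd1 _]] := desc_at H3.
exists (x :: l), nc. split; last split; last exact: H6.
- split => //; rewrite -addn1 desc_cat ?H1 ?H3 //. by rewrite [obind _ _]/= last_rcons.
- split.
  + move=> q. rewrite H5 at_path_node size_rcons ltnSn nth_rcons ltnn eqxx. reflexivity.
  + move=> a q Ha. rewrite H5 at_path_cat Ht0.
    rewrite -/(at_path (a :: q) (Node (x :: l))) !at_path_node size_rcons nth_rcons.
    case: ifP => Ha2; change (obind _ (Some _)) with (at_path (a :: q) (Node (x :: l)));
      rewrite at_path_node.
    * have Ha3 : a < size (x :: l) by rewrite ltn_neqAle Ha -ltnS Ha2.
      by rewrite Ha3.
    * case: ifP => // Ha3. by rewrite ltnS ltnW in Ha2.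
  + move=> q. rewrite at_path_cat Ht0.
    change (obind _ (Some _)) with (at_path ((size (x :: l)).-1 :: q) (Node (x :: l))).
    rewrite at_path_node.
    by rewrite /= ltnSn -[size l]/((size (x :: l)).-1) nth_last.
  + move=> e. rewrite addSnnS toppath_cat H4 Hd1 /= size_rcons last_rcons. done.
  + move=> e. rewrite addSnnS toppath_cat Hd0 /=. done.
Qed.

Section BackwardInvariant.
Variables (n : nat) (Q A G : finType) (delta : Q -> G -> option (trans Q A G)).
Hypothesis Hdelta : dpda_ok n delta.
Variable k : nat.
Hypothesis Hk : 1 <= k <= n.

Variable cm : config Q G.
Hypothesis Hcm : is_config n cm.
Variable tmch : seq (stk G).
Hypothesis Htm : desc (n - k) cm.2 = Some (Node tmch).
Hypothesis Htmne : 0 < size tmch.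

Local Notation N0 := (Node [::] : stk G).
Local Notation histpos := (histpos n delta).
Local Notation back := (back n delta).

Definition tm_loc : seq nat := toppath (n - k) cm.2.
Definition last_child : nat := (size tmch).-1.
Definition tm_top : stk G := nth N0 tmch last_child.

Definition Tracks (c : config Q G) (l : seq (config Q G)) (L : seq nat) : Prop :=
  forall j, j < size tmch -> exists cj,
    at_path (L ++ [:: j]) c.2 = Some cj /\ erase cj = erase (nth N0 tmch j) /\
    forall rest (g : G) x, at_path rest (nth N0 tmch j) = Some (Leaf g x) ->
      histpos (c, l) (map S (tm_loc ++ j :: rest)) = map S (L ++ j :: rest).

Definition Inv (c : config Q G) (l : seq (config Q G)) : Prop :=
  exists L, size L = n - k /\ Tracks c l L.

Lemma last_child_lt : last_child < size tmch.
Proof. by rewrite /last_child prednK. Qed.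

Lemma tm_loc_spec : at_path tm_loc cm.2 = Some (Node tmch) /\ size tm_loc = n - k.
Proof. have [H1 [_ H3]] := desc_at Htm. by split. Qed.

Lemma at_tm_loc j rest : j < size tmch ->
  at_path (tm_loc ++ j :: rest) cm.2 = at_path rest (nth N0 tmch j).
Proof.
move=> Hj; rewrite at_path_cat (proj1 tm_loc_spec).
by rewrite -[obind _ _]/(at_path (j :: rest) (Node tmch)) at_path_node Hj.
Qed.

Lemma tm_leaf_position j rest (g : G) x : j < size tmch ->
  at_path rest (nth N0 tmch j) = Some (Leaf g x) -> x = map S (tm_loc ++ j :: rest).
Proof.
move=> Hj Hr. rewrite -at_tm_loc // in Hr. by have [-> _] := leaf_position (proj1 Hcm) Hr.
Qed.

Lemma desc_tm_top : desc (n - k).+1 cm.2 = Some tm_top.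
Proof.
rewrite /tm_top /last_child -addn1 desc_cat Htm /=. case: tmch Htmne => //= y l _.
by rewrite -[size l]/((size (y :: l)).-1) nth_last.
Qed.

Lemma inv_last : Inv cm [::].
Proof.
exists tm_loc; split; first exact: (proj2 tm_loc_spec).
move=> j Hj; exists (nth N0 tmch j); split; first by rewrite at_tm_loc.
by split => // rest g x _.
Qed.

Lemma histpos_cons c c' l x : histpos (c, c' :: l) x = back c c' (histpos (c', l) x).
Proof. by []. Qed.

Lemma tracks_leaf c l L j rest (g : G) x : Tracks c l L -> j < size tmch ->
  at_path rest (nth N0 tmch j) = Some (Leaf g x) ->
  exists (g' : G) y, at_path (L ++ j :: rest) c.2 = Some (Leaf g' y).
Proof.
move=> H Hj Hr. have [cj [Hcj [Ecj _]]] := H j Hj.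
have [b' [Hb' Eb']] := erase_at_path (esym Ecj) Hr.
have [g' [y Eb]] := erase_leaf_inv Eb'.
exists g', y. by rewrite -cat_rcons -cats1 at_path_cat Hcj -Eb.
Qed.

Lemma inv_back_step c c' l' L' L :
  Tracks c' l' L' -> size L = n - k ->
  (forall j cj, j < size tmch -> at_path (L' ++ [:: j]) c'.2 = Some cj ->
     exists cj', at_path (L ++ [:: j]) c.2 = Some cj' /\ erase cj' = erase cj) ->
  (forall j rest (g : G) x, j < size tmch -> at_path (L' ++ j :: rest) c'.2 = Some (Leaf g x) ->
     back c c' (map S (L' ++ j :: rest)) = map S (L ++ j :: rest)) ->
  Inv c (c' :: l').
Proof.
move=> HT HL Hat Hb. exists L; split => // j Hj.
have [cj [Hcj [Ecj Hh]]] := HT j Hj.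
have [cj' [Hcj' Ecj']] := Hat j cj Hj Hcj.
exists cj'; split => //; split; first by rewrite Ecj' Ecj.
move=> rest g x Hr. rewrite histpos_cons (Hh rest g x Hr).
have [g' [y Hy]] := tracks_leaf HT Hj Hr.
exact: Hb Hy.
Qed.

Lemma upper_of_hist c l : is_config n c -> last c l = cm ->
  (forall rest (g : G) x, at_path rest tm_top = Some (Leaf g x) ->
     exists rest' (g' : G) y, histpos (c, l) (map S (tm_loc ++ last_child :: rest)) =
        map S (toppath (n-k).+1 c.2 ++ rest') /\
        at_path (toppath (n-k).+1 c.2 ++ rest') c.2 = Some (Leaf g' y)) ->
  upper n delta (c, l) k.-1.
Proof.
move=> [Wc Nc] Hl H.
have Hnk : n - k.-1 = (n - k).+1 by lia.
have [u [Hu _]] := desc_wf (e := (n-k).+1) Wc Nc (ltac:(lia)).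
have [Hpu [_ Hsz]] := desc_at Hu.
have Hrl : run_last (c, l) = cm by rewrite /run_last /= Hl.
exists tm_top, u; rewrite /top Hnk Hrl; split; first exact: desc_tm_top.
split => //. split; first by exists (toppath (n-k).+1 c.2); rewrite Hnk.
move=> s0 /in_leavesOf [p [Hp Ls0]]. case: s0 Hp Ls0 => [g x|//] Hp _.
have [rest' [g' [y [Hh Hy]]]] := H p g x Hp.
have Ex : x = map S (tm_loc ++ last_child :: p) by apply: tm_leaf_position Hp; exact: last_child_lt.
rewrite /hist /= Ex Hh. exists (Leaf g' y).
have [Ey _] := leaf_position Wc Hy.
split; first by rewrite -[map S _]cat0s -Ey (leaf_at_of_path Wc Hy).
apply/in_leavesOf; exists rest'; split => //. by rewrite at_path_cat Hpu in Hy.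
Qed.

Lemma upper_back_step c c' l' L' : is_config n c -> last c' l' = cm -> Tracks c' l' L' ->
  (forall rest (g : G) x, at_path (L' ++ last_child :: rest) c'.2 = Some (Leaf g x) ->
     exists rest' (g' : G) y, back c c' (map S (L' ++ last_child :: rest)) =
        map S (toppath (n-k).+1 c.2 ++ rest') /\
        at_path (toppath (n-k).+1 c.2 ++ rest') c.2 = Some (Leaf g' y)) ->
  upper n delta (c, c' :: l') k.-1.
Proof.
move=> Wc Hl H Hb. apply: upper_of_hist => // rest g x Hr.
have [cj [Hcj [Ecj Hh]]] := H last_child last_child_lt.
have [g' [y Hy]] := tracks_leaf H last_child_lt Hr.
rewrite histpos_cons (Hh rest g x Hr). exact: Hb Hy.
Qed.

Lemma off_top_children (s : stk G) L j : size L = n - k ->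
  at_path (L ++ [:: last_child]) s <> None ->
  L ++ [:: last_child] != toppath (n-k).+1 s -> j < size tmch ->
  L ++ [:: j] != toppath (n-k).+1 s.
Proof.
move=> HL He Ht Hj. apply/eqP => Ej.
case Ee: (at_path (L ++ [:: last_child]) s) He => [x|] // _.
have := toppath_last_max Ee. rewrite HL => /(_ j Ej) Hej.
have Eje : j = last_child by apply/eqP; rewrite eqn_leq Hej andbT -ltnS /last_child prednK.
by rewrite -Eje Ej eqxx in Ht.
Qed.

(* Backward step over pop^r: orders r >= k leave the tracked children in
   place; for r < k, either the tracked copy of tm_top is top^(k-1)(c'),
   and then also of c, contradicting non-upperness, or all tracked
   children are off the popped region. *)
Lemma step_pop c c' l' L' r : is_config n c -> is_config n c' -> last c' l' = cm ->
  size L' = n - k -> Tracks c' l' L' ->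
  ~ upper n delta (c, c' :: l') k.-1 ->
  1 <= r <= n -> pop n r c.2 = Some c'.2 -> (forall x, back c c' x = x) -> Inv c (c' :: l').
Proof.
move=> Wc Wc' Hl HL H NU Hr Hpop Hb.
have [HT [HTs Hsub]] := pop_spec Hpop.
have He' : at_path (L' ++ [:: last_child]) c'.2 <> None.
  by have [cj [-> _]] := H last_child last_child_lt.
case: (leqP k r) => Hkr.
  apply: (inv_back_step (L' := L') (L := L')) => //.
  move=> j cj Hj Hcj; exists cj; split => //. apply: Hsub Hcj. left. rewrite size_cat HL /=. lia.
have Etk : forall s0 : stk G, toppath (n-k).+1 s0 = take (n-k).+1 (toppath (n-r) s0).
  move=> s0. rewrite (toppath_take (n-k).+1 (n-r-(n-k).+1) s0).
  by have -> : (n-k).+1 + (n-r-(n-k).+1) = n - r by lia.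
case: (eqVneq (L' ++ [:: last_child]) (toppath (n-k).+1 c'.2)) => Htop.
- exfalso; apply: NU. apply: (upper_back_step (L' := L')) => // rest g x Hx.
  have Etp : toppath (n-k).+1 c.2 = L' ++ [:: last_child] by rewrite Htop !Etk HT.
  exists rest, g, x. rewrite Hb Etp -catA cat1s. split => //.
  have [_ Hs] := leaf_position (proj1 Wc') Hx. apply: Hsub Hx. left. rewrite Hs. lia.
- apply: (inv_back_step (L' := L') (L := L')) => //.
  + move=> j cj Hj Hcj; exists cj; split => //. apply: Hsub Hcj. right.
    rewrite size_cat HL addn1 -HT -Etk eq_sym. exact: (off_top_children HL He' Htop Hj).
Qed.

(* T is the location of the
   topmost r-stack of c, whose children ch get a new last child nc (at
   T ++ [size ch] = Tc in c'), a copy of lc (at T ++ [(size ch).-1]) with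
   positions shifted at coordinate n - r; [back] undoes that shift on nc. *)
Section PushStep.
Variables (c c' : config Q G) (l' : seq (config Q G)) (L' : seq nat) (r : nat) (g : G).
Hypotheses (Wc : is_config n c) (Wc' : is_config n c') (Hl : last c' l' = cm).
Hypotheses (HL : size L' = n - k) (H : Tracks c' l' L').
Hypotheses (Hr : 1 <= r <= n).
Variables (T : seq nat) (ch : seq (stk G)) (nc lc : stk G).
Hypotheses (Hch : 0 < size ch) (HTs : size T = n - r).
Hypothesis Enc : nc = mapPos (incAt (n - r)) (settop g lc).
Hypothesis at_nc : forall q, at_path (T ++ size ch :: q) c'.2 = at_path q nc.
Hypothesis at_sibling : forall a q, a != size ch ->
  at_path (T ++ a :: q) c'.2 = at_path (T ++ a :: q) c.2.
Hypothesis at_lc : forall q, at_path (T ++ (size ch).-1 :: q) c.2 = at_path q lc.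
Hypothesis toppath_c' : forall e, toppath ((n-r).+1 + e) c'.2 = T ++ size ch :: toppath e nc.
Hypothesis toppath_c : forall e, toppath ((n-r).+1 + e) c.2 = T ++ (size ch).-1 :: toppath e lc.
Hypothesis at_off_T : forall q i, i < size q -> i < n - r -> nth 0 q i != nth 0 T i ->
  at_path q c'.2 = at_path q c.2.
Hypothesis back_push : forall x, back c c' x = if x \in positions nc then decAt (n - r) x else x.

Local Notation Tc := (T ++ [:: size ch]).

Lemma size_Tc : size Tc = (n - r).+1.
Proof. by rewrite size_cat HTs addn1. Qed.

Lemma cat_Tc p : Tc ++ p = T ++ size ch :: p.
Proof. by rewrite -catA. Qed.

Lemma nc_position x : x \in positions nc -> exists p, x = map S (Tc ++ p) /\
  exists (g' : G) y, at_path p nc = Some (Leaf g' y).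
Proof.
move=> /mem_positions [g' [p Hp]]. exists p; split; last by exists g', x.
have Hp' := Hp; rewrite -at_nc -cat_Tc in Hp'. by have [-> _] := leaf_position (proj1 Wc') Hp'.
Qed.

Lemma nc_position_of p (g' : G) y : at_path p nc = Some (Leaf g' y) ->
  map S (Tc ++ p) \in positions nc.
Proof.
move=> Hp. have Hp' := Hp; rewrite -at_nc -cat_Tc in Hp'.
have [Ey _] := leaf_position (proj1 Wc') Hp'.
rewrite -[map S _]cat0s -Ey. apply/mem_positions; by exists g', p.
Qed.

Lemma below_Tc_position z (g' : G) y : at_path z c'.2 = Some (Leaf g' y) ->
  take (size Tc) z = Tc -> map S z \in positions nc.
Proof.
move=> Hz Ht. have Ez : z = Tc ++ drop (size Tc) z by rewrite -{1}(cat_take_drop (size Tc) z) Ht.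
rewrite Ez cat_Tc at_nc in Hz. rewrite Ez. exact: nc_position_of Hz.
Qed.

Lemma nc_leaf_lc p (g' : G) y : at_path p nc = Some (Leaf g' y) ->
  exists (g'' : G) y', at_path p lc = Some (Leaf g'' y').
Proof.
rewrite Enc at_path_mapPos. case E1: (at_path p (settop g lc)) => [t|] //= [Et].
apply: (settop_at_leaf E1). by case: t Et {E1}.
Qed.

Lemma toppath_nc e : toppath e nc = toppath e lc.
Proof. by rewrite Enc toppath_mapPos toppath_settop. Qed.

Lemma push_off_Tc q : take (size Tc) q != Tc -> take (size q) Tc != q ->
  at_path q c'.2 = at_path q c.2.
Proof.
move=> H1 H2. case: (prefix_trichotomy q T) => [E|[E|[i [Hi1 Hi2 Hi3]]]].
- move: H1 H2; rewrite -E. case Ew: (drop (size T) q) => [|a w].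
  + rewrite cats0 => _. by rewrite take_size_cat // eqxx.
  + move=> H1 _. have Ha : a != size ch.
      apply: contra H1 => /eqP ->. by rewrite size_Tc -HTs take_cat ltnNge leqnSn /= subSnn /= ?take0.
    exact: at_sibling.
- have Etq : take (size q) T = q by rewrite -E take_size_cat.
  have Hs : size q <= size T by rewrite -E size_cat leq_addr.
  by rewrite takel_cat // Etq eqxx in H2.
- apply: at_off_T Hi1 _ Hi3. by rewrite -HTs.
Qed.

Lemma tracked_top_exists : at_path (L' ++ [:: last_child]) c'.2 <> None.
Proof. by have [cj [-> _]] := @H last_child last_child_lt. Qed.

(* Order r > k, tracked copy of tm_top on top of c': it lies in the new
   child nc, and its history in c is top^(k-1)(c) inside lc. *)
Lemma push_high_top : k < r -> L' ++ [:: last_child] = toppath (n-k).+1 c'.2 ->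
  upper n delta (c, c' :: l') k.-1.
Proof.
move=> Hkr Htop.
have Ek1 : toppath (n-k).+1 c'.2 = T ++ size ch :: toppath (r-k) nc.
  rewrite -toppath_c'; congr toppath; lia.
have Ek1' : toppath (n-k).+1 c.2 = T ++ (size ch).-1 :: toppath (r-k) lc.
  rewrite -toppath_c; congr toppath; lia.
apply: (upper_back_step (L' := L')) => // rest g0 x Hx.
have Ez : L' ++ last_child :: rest = T ++ size ch :: (toppath (r-k) nc ++ rest).
  by rewrite -cat1s catA Htop Ek1 -catA.
rewrite Ez at_nc in Hx.
have [g2 [y2 Hy2]] := nc_leaf_lc Hx.
exists rest, g2, y2. rewrite Ek1' -toppath_nc -catA cat_cons.
rewrite -at_lc in Hy2. split => //.
by rewrite Ez back_push -cat_Tc (nc_position_of Hx) cat_Tc -HTs decAt_map.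
Qed.

(* Order r > k, tracked copy of tm_top not on top of c': tracked children
   inside nc move to the corresponding location inside lc; others stay. *)
Lemma push_high_off_top : k < r -> L' ++ [:: last_child] != toppath (n-k).+1 c'.2 ->
  Inv c (c' :: l').
Proof.
move=> Hkr Htop.
have Ek1 : toppath (n-k).+1 c'.2 = T ++ size ch :: toppath (r-k) nc.
  rewrite -toppath_c'; congr toppath; lia.
case: (boolP (take (size Tc) L' == Tc)) => HLT.
- set q'' := drop (size Tc) L'.
  have EL' : L' = Tc ++ q'' by rewrite -(eqP HLT) cat_take_drop.
  have Hsq : size q'' = (r - k).-1.
    have := congr1 size EL'; rewrite size_cat size_Tc HL. lia.
  apply: (inv_back_step (L' := L') (L := T ++ (size ch).-1 :: q'')) => //.
  + rewrite /= size_cat /= Hsq HTs. lia.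
  + move=> j cj Hj Hcj.
    have EQ : L' ++ [:: j] = T ++ size ch :: (q'' ++ [:: j]) by rewrite EL' cat_Tc -catA.
    rewrite EQ at_nc Enc at_path_mapPos in Hcj.
    rewrite at_path_settop_off_top in Hcj; last first.
      apply/eqP => Eqj. have := off_top_children HL tracked_top_exists Htop Hj.
      rewrite EQ Ek1 toppath_nc.
      have -> : r - k = size (q'' ++ [:: j]) by rewrite size_cat Hsq /=; lia.
      by rewrite -Eqj eqxx.
    case E0: (at_path (q'' ++ [:: j]) lc) Hcj => [cj0|] //= [<-].
    exists cj0; split; last by rewrite erase_mapPos.
    by rewrite -catA /= at_lc.
  + move=> j rest g0 x Hj Hx.
    have EQ : L' ++ j :: rest = T ++ size ch :: (q'' ++ j :: rest) by rewrite EL' cat_Tc -catA.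
    rewrite EQ at_nc in Hx. rewrite EQ back_push -cat_Tc (nc_position_of Hx) cat_Tc -HTs decAt_map //.
    by rewrite -catA.
- apply: (inv_back_step (L' := L') (L := L')) => //.
  + move=> j cj Hj Hcj. exists cj; split => //. rewrite -Hcj; symmetry; apply: push_off_Tc.
    * rewrite takel_cat //. rewrite size_Tc HL. lia.
    * rewrite take_oversize ?size_Tc ?size_cat ?HL /=; last lia.
      apply/eqP => E0. have := congr1 size E0. rewrite size_Tc size_cat HL /=. lia.
  + move=> j rest g0 x Hj Hx. rewrite back_push. case: ifP => // Hp.
    have [p [Ep _]] := nc_position Hp. have Ep' := inj_map succn_inj Ep.
    have := congr1 (take (size Tc)) Ep'. rewrite takel_cat ?size_Tc ?HL; last lia.
    rewrite take_size_cat ?size_Tc // => E0. by rewrite size_Tc E0 eqxx in HLT.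
Qed.

Lemma toppath_low_c' : r <= k -> toppath (n-k).+1 c'.2 = take (n-k).+1 Tc.
Proof.
move=> Hrk. rewrite (toppath_take (n-k).+1 (k-r) c'.2).
have -> : (n-k).+1 + (k-r) = (n-r).+1 + 0 by lia.
by rewrite toppath_c'.
Qed.

Lemma toppath_low_c : r <= k -> toppath (n-k).+1 c.2 = take (n-k).+1 (T ++ [:: (size ch).-1]).
Proof.
move=> Hrk. rewrite (toppath_take (n-k).+1 (k-r) c.2).
have -> : (n-k).+1 + (k-r) = (n-r).+1 + 0 by lia.
by rewrite toppath_c.
Qed.

(* Order r <= k, tracked copy of tm_top on top of c': each of its 0-stacks
   is either in nc, and goes back into lc, or is unaffected; in both cases
   its history is in top^(k-1)(c). *)
Lemma push_low_top : r <= k -> L' ++ [:: last_child] = toppath (n-k).+1 c'.2 ->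
  upper n delta (c, c' :: l') k.-1.
Proof.
move=> Hkr Htop.
have Ek2 := toppath_low_c' Hkr. have Ek2' := toppath_low_c Hkr.
apply: (upper_back_step (L' := L')) => // rest g0 x Hx.
case: (boolP (map S (L' ++ last_child :: rest) \in positions nc)) => Hp.
- have [p [Ep [g1 [y1 Hy1]]]] := nc_position Hp.
  have [g2 [y2 Hy2]] := nc_leaf_lc Hy1.
  set Y := T ++ (size ch).-1 :: p.
  have EP : toppath (n-k).+1 c.2 = take (n-k).+1 Y.
    rewrite Ek2' /Y -[(size ch).-1 :: p]cat1s catA [in RHS]takel_cat // size_cat HTs /=. lia.
  exists (drop (n-k).+1 Y), g2, y2. rewrite EP cat_take_drop /Y -at_lc in Hy2 *.
  split => //. by rewrite back_push Hp Ep cat_Tc -HTs decAt_map.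
- rewrite back_push (negbTE Hp).
  have Hrk : r < k.
    rewrite ltn_neqAle Hkr andbT. apply/eqP => Erk. move: Hp; apply/negP; rewrite negbK.
    apply: (below_Tc_position Hx).
    have ETk : take (n-k).+1 Tc = Tc by rewrite take_oversize // size_Tc; lia.
    by rewrite -[last_child :: rest]cat1s catA Htop Ek2 ETk take_size_cat.
  have EP : toppath (n-k).+1 c.2 = L' ++ [:: last_child].
    rewrite Htop Ek2 Ek2' !takel_cat // HTs; lia.
  exists rest, g0, x. rewrite EP -catA cat1s. split => //.
  rewrite -Hx; symmetry; apply: push_off_Tc.
  + apply/negP => /eqP Et. move: Hp; apply/negP; rewrite negbK. exact: below_Tc_position Hx Et.
  + have [_ Hsz] := leaf_position (proj1 Wc') Hx. rewrite Hsz take_oversize ?size_Tc; last lia.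
    apply/negP => /eqP Et. move: Hp; apply/negP; rewrite negbK. apply: (below_Tc_position Hx).
    by rewrite -Et take_size.
Qed.

(* Order r <= k, tracked copy of tm_top not on top of c': no tracked child
   meets the pushed region, so everything stays in place. *)
Lemma push_low_off_top : r <= k -> L' ++ [:: last_child] != toppath (n-k).+1 c'.2 ->
  Inv c (c' :: l').
Proof.
move=> Hkr Htop. have Ek2 := toppath_low_c' Hkr.
have Hoff := off_top_children HL tracked_top_exists Htop.
apply: (inv_back_step (L' := L') (L := L')) => //.
- move=> j cj Hj Hcj. exists cj; split => //. rewrite -Hcj; symmetry.
  have Hnt := Hoff j Hj. rewrite Ek2 in Hnt.
  have H2 : take (size (L' ++ [:: j])) Tc != L' ++ [:: j].
    by rewrite size_cat HL addn1 eq_sym.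
  apply: push_off_Tc => //. apply: contra H2 => /eqP E0.
  rewrite take_oversize ?size_Tc ?size_cat ?HL /= in E0; last lia.
  by rewrite -E0 take_size.
- move=> j rest g0 x Hj Hx. rewrite back_push. case: ifP => // Hp.
  have [p [Ep _]] := nc_position Hp. have Ep' := inj_map succn_inj Ep.
  have := congr1 (take (n-k).+1) Ep'.
  rewrite (takel_cat (n0 := (n-k).+1) (s1 := Tc) p); last by rewrite size_Tc; lia.
  rewrite take_cat HL ltnNge leqnSn /= subSnn /= ?take0 -Ek2 => E0.
  have := Hoff j Hj. by rewrite E0 eqxx.
Qed.

End PushStep.

(* Backward step over push^r_g: combine the four cases above, the two
   "on top" cases contradicting non-upperness. *)
Lemma step_push c c' l' L' r (g : G) : is_config n c -> is_config n c' -> last c' l' = cm ->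
  size L' = n - k -> Tracks c' l' L' ->
  ~ upper n delta (c, c' :: l') k.-1 ->
  1 <= r <= n -> push n r g c.2 = Some c'.2 ->
  (forall x, back c c' x = match top n r.-1 c'.2 with
     | Some t => if x \in positions t then decAt (n - r) x else x | None => x end) ->
  Inv c (c' :: l').
Proof.
move=> Wc Wc' Hl HL H NU Hr Hpush Hb0.
have [ch [nc [[Hch Enc HTs Hdnc _] [[at_nc at_sibling at_lc toppath_c' toppath_c] at_off_T]]]] := push_spec Hpush.
have back_push : forall x, back c c' x = if x \in positions nc then decAt (n - r) x else x.
  by move=> x; rewrite Hb0 /top (_ : n - r.-1 = (n - r).+1) ?Hdnc //; lia.
case: (ltnP k r) => Hkr;
  case: (eqVneq (L' ++ [:: last_child]) (toppath (n-k).+1 c'.2)) => Htop.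
- by case: (NU (push_high_top Wc Wc' Hl HL H Hr Hch HTs Enc at_nc at_lc toppath_c' toppath_c back_push Hkr Htop)).
- exact: (push_high_off_top Wc' HL H Hr Hch HTs Enc at_nc at_sibling at_lc toppath_c' at_off_T back_push Hkr Htop).
- by case: (NU (push_low_top Wc Wc' Hl HL H Hr Hch HTs Enc at_nc at_sibling at_lc toppath_c' toppath_c at_off_T back_push Hkr Htop)).
- exact: (push_low_off_top Wc' HL H Hr Hch HTs at_nc at_sibling toppath_c' at_off_T back_push Hkr Htop).
Qed.

(* One backward step along a transition preserves the invariant, unless the
   suffix starting at c is (k-1)-upper.  Reads change neither stack nor
   histories. *)
Lemma inv_step c c' l' : succ n delta c c' -> is_config n c -> is_config n c' ->
  last c' l' = cm -> Inv c' l' -> ~ upper n delta (c, c' :: l') k.-1 -> Inv c (c' :: l').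
Proof.
move=> Hs Wc Wc' Hl [L' [HL H]] NU.
move: Hs; rewrite /succ. case E: (trans_of n delta c) => [[f Hf|q o]|] //.
- move=> [a Ec'].
  apply: (inv_back_step (L' := L') (L := L')) => //.
  + move=> j cj Hj Hcj; exists cj; split => //. by rewrite -Hcj Ec'.
  + move=> j rest g x _ _. by rewrite /back E.
- move=> [_ Hop].
  have Hord : 1 <= sop_ord o <= n.
    move: E; rewrite /trans_of. case: (topsym n c.2) => // g. exact: Hdelta.
  case: o E Hop Hord => [r|r g] E Hop Hord.
  + apply: (step_pop Wc Wc' Hl HL H NU Hord Hop) => x. by rewrite /back E.
  + apply: (step_push Wc Wc' Hl HL H NU Hord Hop) => x. by rewrite /back E.
Qed.

Lemma suffix_cons (c c' : config Q G) l' i : i < size l' ->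
  Defs.suffix (c, c' :: l') i.+1 = Defs.suffix (c', l') i.
Proof.
move=> Hi. rewrite /Defs.suffix /=. have Hi' : i < size (c' :: l') by rewrite /= ltnS ltnW.
by rewrite (drop_nth c' Hi').
Qed.

Lemma inv_run l : forall c, chain n delta c l -> List.Forall (@is_config n Q G) (c :: l) ->
  last c l = cm -> (forall i, i < size l -> ~ upper n delta (Defs.suffix (c, l) i) k.-1) -> Inv c l.
Proof.
elim: l => [|c' l' IH] c Hch Hf Hl Hnu; first by rewrite /= in Hl; subst c; exact: inv_last.
case: Hch => Hs Hch'.
have Wc := List.Forall_inv Hf. have Hf' := List.Forall_inv_tail Hf.
apply: inv_step => //.
- exact: List.Forall_inv Hf'.
- apply: IH => // i Hi. rewrite -(suffix_cons c) //. exact: Hnu.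
- exact: (Hnu 0 isT).
Qed.

(* tm_top is a nonempty well-formed (k-1)-stack, so it has a 0-stack. *)
Lemma tm_top_has_leaf : exists p (g : G) x, at_path p tm_top = Some (Leaf g x).
Proof.
have [t [Ht Nt]] := desc_wf (e := (n-k).+1) (proj1 Hcm) (proj2 Hcm) (ltac:(lia)).
rewrite desc_tm_top in Ht. case: Ht => Et; subst t.
have [Hpt [_ _]] := desc_at desc_tm_top. have [_ Wt] := wf_at_path (proj1 Hcm) Hpt.
exact: has_leaf Wt Nt.
Qed.

Lemma tracked_top_location c0 l L T i u : wf n [::] c0.2 ->
  size L = n - k -> size T = n - k -> Tracks c0 l L ->
  at_path (T ++ [:: i]) c0.2 = Some u -> hist_is n delta (c0, l) k.-1 tm_top u ->
  L = T /\ last_child = i.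
Proof.
move=> W0 HL HT HI Hu Hhist.
have [p [g [x Hpx]]] := tm_top_has_leaf.
have [s0' [Hh0 Hin0]] := proj2 Hhist (Leaf g x) (proj2 (in_leavesOf _ _) (ex_intro _ p (conj Hpx isT))).
have [g' [y Hy]] := tracks_leaf HI last_child_lt Hpx.
have [Ey _] := leaf_position W0 Hy.
have [cj [_ [_ Hh]]] := HI last_child last_child_lt.
move: Hh0; rewrite /hist /= (tm_leaf_position last_child_lt Hpx) (Hh _ _ _ Hpx).
rewrite -[map S (L ++ _)]cat0s -Ey (leaf_at_of_path W0 Hy) => [[Es0']]. subst s0'.
have [p'' [Hp'' _]] := proj1 (in_leavesOf _ _) Hin0.
have Hy2 : at_path (T ++ i :: p'') c0.2 = Some (Leaf g' y).
  by rewrite -cat1s catA at_path_cat Hu.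
have [Ey2 _] := leaf_position W0 Hy2.
rewrite Ey2 /= in Ey. move/(inj_map succn_inj)/eqP: Ey.
by rewrite eqseq_cat ?HL ?HT // => /andP [/eqP -> /eqP [->]].
Qed.

Lemma tracked_conclusion c0 l T b : wf n [::] c0.2 -> Tracks c0 l T -> size tmch = size b ->
  (forall a q, a < size b -> at_path (T ++ a :: q) c0.2 = at_path q (nth N0 b a)) ->
  cong (Node b) (Node tmch) /\
  forall path s0, at_path path (Node tmch) = Some s0 -> is_leaf s0 ->
    exists u, at_path path (Node b) = Some u /\ hist n delta (c0, l) s0 = Some u.
Proof.
move=> W0 HI Esz Hchild.
have Hcong : forall j, j < size b -> erase (nth N0 b j) = erase (nth N0 tmch j).
  move=> j Hj. have Hj' : j < size tmch by rewrite Esz.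
  have [cj [Hcj [Ecj _]]] := HI j Hj'.
  by move: Hcj; rewrite Hchild // => [[->]].
split.
- rewrite /cong !erase_node. congr Node.
  apply: (@eq_from_nth _ (erase N0)); first by rewrite !size_map Esz.
  move=> j; rewrite size_map => Hj.
  by rewrite (nth_map N0 _ _ Hj) (nth_map N0) ?Esz // Hcong.
- move=> [|j rest] s0l; first by move=> [<-].
  rewrite at_path_node; case: ifP => // Hj Hr Ls.
  case: s0l Hr Ls => // g0 x0 Hr _.
  have Hjb : j < size b by rewrite -Esz.
  have [b' [Hb' Eb']] := erase_at_path (esym (Hcong j Hjb)) Hr.
  have [g1 [y1 Eb]] := erase_leaf_inv Eb'. subst b'.
  exists (Leaf g1 y1). split; first by rewrite at_path_node Hjb.
  have [cj2 [_ [_ Hh1]]] := HI j Hj.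
  rewrite /hist /= (tm_leaf_position Hj Hr) (Hh1 _ _ _ Hr).
  have Hy1 : at_path (T ++ j :: rest) c0.2 = Some (Leaf g1 y1) by rewrite Hchild.
  have [Ey1 _] := leaf_position W0 Hy1.
  by rewrite -[map S (T ++ _)]cat0s -Ey1 (leaf_at_of_path W0 Hy1).
Qed.

Lemma desc1_last (b : seq (stk G)) u : desc 1 (Node b) = Some u -> u = nth N0 b (size b).-1.
Proof. case: b => //= y b' [<-]. by rewrite -[size b']/((size (y :: b')).-1) nth_last. Qed.

Lemma kreturn_top (R : run Q G) : run_last R = cm -> is_run n delta R -> kreturn n delta R k ->
  exists t0 tm p, top n k (run_first R).2 = Some t0 /\ top n k (run_last R).2 = Some tm /\
    popl t0 = Some p /\ cong p tm /\
    (forall (path : seq nat) (s0 : stk G), at_path path tm = Some s0 -> is_leaf s0 ->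
        exists u, at_path path p = Some u /\ hist n delta R s0 = Some u).
Proof.
case: R => [c0 l] Hlast [Hch Hf] [[s' [t [u [Hpop [Ht [Hu Hhist]]]]]] Hnu].
change (last c0 l = cm) in Hlast.
have W0 : wf n [::] c0.2 := proj1 (List.Forall_inv Hf).
have [L [HL HI]] := inv_run Hch Hf Hlast Hnu.
have [t0 [t1 [H1 [H2 [H3 _]]]]] := modtop_spec Hpop.
have [b [z [Et0 [Hb Et1]]]] := popl_spec H2. subst t0 t1.
have [Ht0 [_ HTs]] := desc_at H1.
move: (toppath (n - k) c0.2) Ht0 HTs => T Ht0 HTs.
have Hchild : forall a q, a < size b -> at_path (T ++ a :: q) c0.2 = at_path q (nth N0 b a).
  move=> a q Ha. rewrite at_path_cat Ht0.
  change (obind _ (Some _)) with (at_path (a :: q) (Node (rcons b z))).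
  by rewrite at_path_node size_rcons ltnS ltnW // nth_rcons Ha.
have Hnk : n - k.-1 = (n - k).+1 by lia.
have Eu : u = nth N0 b (size b).-1.
  apply: desc1_last. by move: Hu; rewrite /top Hnk -addn1 desc_cat H3.
have Hut : at_path (T ++ [:: (size b).-1]) c0.2 = Some u by rewrite Hchild ?prednK // Eu.
have Etl : t = tm_top.
  move: Ht; rewrite /top Hnk. change (run_last (c0, l)) with (last c0 l).
  by rewrite Hlast desc_tm_top => [[]].
subst t.
have [EL Elast] := tracked_top_location W0 HL HTs HI Hut Hhist. subst L.
have Esz : size tmch = size b by rewrite -(prednK Htmne) -(prednK Hb) -Elast.
have [Hcong Hleaves] := tracked_conclusion W0 HI Esz Hchild.
exists (Node (rcons b z)), (Node tmch), (Node b).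
by rewrite /top /run_last /= Hlast Htm H1; do !split.
Qed.

End BackwardInvariant.

Lemma Forall_last (T : Type) (P : T -> Prop) c l : List.Forall P (c :: l) -> P (last c l).
Proof.
elim: l c => [|c' l IH] c H; first exact: List.Forall_inv H.
exact: IH (List.Forall_inv_tail H).
Qed.

Theorem mainTheorem8 (n : nat) (Q A G : finType)
    (delta : Q -> G -> option (trans Q A G)) (Hdelta : dpda_ok n delta)
    (k : nat) (R : run Q G) :
  1 <= k <= n ->
  is_run n delta R ->
  kreturn n delta R k ->
  exists t0 tm p,
    top n k (run_first R).2 = Some t0 /\
    top n k (run_last R).2 = Some tm /\
    popl t0 = Some p /\
    cong p tm /\
    (forall (path : seq nat) (s0 : stk G),
        at_path path tm = Some s0 -> is_leaf s0 ->
        exists u, at_path path p = Some u /\ hist n delta R s0 = Some u).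
Proof.
move=> Hk HR HK.
(* top^k of the last configuration is a nonempty k-stack, hence a node *)
have Wcm : is_config n (run_last R) by apply: Forall_last (proj2 HR).
have [tm [Htm Ntm]] := desc_wf (proj1 Wcm) (proj2 Wcm) (leq_subr k n).
have [Hp [_ Hs]] := desc_at Htm. have [_ Wtm] := wf_at_path (proj1 Wcm) Hp.
rewrite Hs in Wtm.
case: tm Htm Ntm Wtm Hp => [g x|tmch] Htm Ntm Wtm Hp.
  by have [H0 _] := wf_leaf Wtm; lia.
have Htmne : 0 < size tmch by case: tmch Ntm {Htm Hp Wtm}.
exact: (kreturn_top Hdelta Hk Wcm Htm Htmne (erefl _) HR HK).
Qed.
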